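(* If the network $T$ is symmetric and the confirmation-bias network $T^*$ is strongly connected, then all agents have equal influence $s_i=1/n$ in $T$, and confirmation bias does not alter any agent's influence, i.e. $s^*_i=s_i=1/n$ for all $i$.
   Context: Agents $N=\{1,\dots,n\}$ communicate through a network $T$, an $n\times n$ row-stochastic matrix with entries $T_{ij}\in[0,1]$, assumed strongly connected and aperiodic. Each agent has an initial belief $x_{i0}\in[0,1]$. Confirmation bias of strength $q\in[0,1]$ (common to all agents) produces $T^*$: for $j\ne i$, if $|x_{i0}-x_{j0}|>1-q$ then $T^*_{ij}=0$ and $T_{ij}$ is added to the self-link $T^*_{ii}$; otherwise $T^*_{ij}=T_{ij}$. The influence vector $s$ of a network $P$ is the left eigenvector for eigenvalue $1$, normalized to sum to $1$: $s=sP$, i.e. $s_i=\sum_j P_{ji}s_j$; $s$ and $s^*$ denote the influence vectors of $T$ and $T^*$. *)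

From HB Require Import structures.
From mathcomp Require Import all_boot all_order all_algebra.
From mathcomp Require Import reals.
Set Implicit Arguments. Unset Strict Implicit. Unset Printing Implicit Defensive.
Import Order.TTheory GRing.Theory Num.Theory.
Local Open Scope ring_scope.

Section Defs.
Variable R : realType.
Variable n : nat.

Definition row_stochastic (T : 'M[R]_n) : Prop :=
  (forall i j, 0 <= T i j <= 1) /\ (forall i, \sum_j T i j = 1).

Definition net_rel (T : 'M[R]_n) : rel 'I_n := fun i j => 0 < T i j.

Definition strongly_connected (T : 'M[R]_n) : Prop :=
  forall i j, connect (net_rel T) i j.

(* k-th matrix power (defined for every n) *)
Definition mxpow (T : 'M[R]_n) (k : nat) : 'M[R]_n :=
  iter k (fun M => M *m T) 1%:M.

(* aperiodic: for every i, the gcd of the lengths of closed walks at i is 1 *)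
Definition aperiodic (T : 'M[R]_n) : Prop :=
  forall i, forall d : nat,
    (forall k : nat, (0 < k)%N -> 0 < mxpow T k i i -> (d %| k)%N) -> d = 1%N.

Definition symmetric_net (T : 'M[R]_n) : Prop := T^T = T.

Definition Tstar (T : 'M[R]_n) (x0 : 'I_n -> R) (q : R) : 'M[R]_n :=
  \matrix_(i, j)
    if i == j then
      T i i + \sum_(k | (k != i) && (1 - q < `|x0 i - x0 k|)) T i k
    else if 1 - q < `|x0 i - x0 j| then 0 else T i j.

Definition is_influence (P : 'M[R]_n) (s : 'rV[R]_n) : Prop :=
  s *m P = s /\ \sum_i s 0 i = 1.

End Defs.

(** Confirmation bias only deletes links of a symmetric network and moves their
    weight to the self-loops, so [T*] is again symmetric and row-stochastic.  For a
    symmetric stochastic matrix [P], [s P = s] says that [s^T] is harmonic for [P],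
    i.e. each entry is a weighted average of its neighbours; by the maximum
    principle a harmonic vector is constant on a strongly connected network, and
    normalisation forces the constant to be [1/n].  Conversely the uniform vector
    is invariant because the column sums of a symmetric stochastic matrix are 1. *)
From HB Require Import structures.
From mathcomp Require Import all_boot all_order all_algebra.
From mathcomp Require Import reals.
Import Order.TTheory GRing.Theory Num.Theory.
Local Open Scope ring_scope.

Section SymmetricStochastic.
Variables (R : realType) (n : nat) (P : 'M[R]_n).
Hypotheses (P_ge0 : forall i j, 0 <= P i j) (P_row1 : forall i, \sum_j P i j = 1).

Lemma harmonic_max_step (v : 'cV[R]_n) i j :
  P *m v = v -> (forall k, v k 0 <= v i 0) -> 0 < P i j -> v j 0 = v i 0.
Proof.
move=> Pv vi_max Pij_gt0.
have vi_avg : v i 0 = \sum_k P i k * v k 0 by rewrite -{1}Pv mxE.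
have sum0 : \sum_k P i k * (v i 0 - v k 0) = 0.
  under eq_bigr => k _ do rewrite mulrBr.
  by rewrite sumrB -mulr_suml P_row1 mul1r -vi_avg subrr.
have term_ge0 k : true -> 0 <= P i k * (v i 0 - v k 0).
  by move=> _; rewrite mulr_ge0 ?subr_ge0.
move/eqP: (psumr_eq0P term_ge0 sum0 (i:=j) isT).
by rewrite mulf_eq0 gt_eqF //= subr_eq0 => /eqP.
Qed.

Lemma harmonic_const (v : 'cV[R]_n) :
  strongly_connected P -> P *m v = v -> forall i j, v i 0 = v j 0.
Proof.
move=> P_sc Pv i j.
have [m _ m_max] := @arg_maxP _ _ _ i xpredT (fun k => v k 0) isT.
have {m_max} v_max k : v k 0 <= v m 0 by exact: m_max.
suff eq_max k : v k 0 = v m 0 by rewrite !eq_max.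
have /connectP [p p_path ->] := P_sc m k.
elim: p m v_max p_path => [|a p IHp] x x_max //= /andP [xa a_path].
have va : v a 0 = v x 0 by exact: harmonic_max_step Pv x_max xa.
by rewrite -va; apply: IHp => // l; rewrite va.
Qed.

Lemma sym_influence_uniform (s : 'rV[R]_n) :
  (0 < n)%N -> symmetric_net P -> strongly_connected P ->
  is_influence P s <-> (forall i, s 0 i = n%:R^-1).
Proof.
move=> n_gt0 P_sym P_sc.
have n_neq0 : (n%:R : R) != 0 by rewrite pnatr_eq0 -lt0n.
split=> [[sP s_sum] i | s_unif].
- have Ps : P *m s^T = s^T by rewrite -{1}P_sym -trmx_mul sP.
  have s_const k : s 0 k = s 0 i.
    by have := harmonic_const _ P_sc Ps k i; rewrite !mxE.
  rewrite (eq_bigr _ (fun k _ => s_const k)) sumr_const card_ord in s_sum.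
  by apply: (mulfI n_neq0); rewrite mulfV // mulr_natl.
- split; last by rewrite (eq_bigr _ (fun i _ => s_unif i)) sumr_const card_ord
    -[LHS]mulr_natr mulVf.
  apply/rowP => j; rewrite mxE s_unif.
  have P_symE k l : P k l = P l k by rewrite -{1}P_sym mxE.
  under eq_bigr => k _ do rewrite s_unif P_symE.
  by rewrite -mulr_sumr P_row1 mulr1.
Qed.

End SymmetricStochastic.

Section ConfirmationBias.
Variables (R : realType) (n : nat) (T : 'M[R]_n) (x0 : 'I_n -> R) (q : R).

Lemma Tstar_ge0 : (forall i j, 0 <= T i j) -> forall i j, 0 <= Tstar T x0 q i j.
Proof.
move=> T_ge0 i j; rewrite mxE; case: eqP => _.
  by rewrite addr_ge0 ?sumr_ge0.
by case: ifP.
Qed.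

Lemma Tstar_row_sum i : \sum_j Tstar T x0 q i j = \sum_j T i j.
Proof.
rewrite (bigD1 i) //= [RHS](bigD1 i) //= mxE eqxx -addrA; congr (_ + _).
rewrite big_mkcondr -big_split /=; apply: eq_bigr => j ji.
by rewrite mxE eq_sym (negbTE ji); case: ifP; rewrite ?add0r ?addr0.
Qed.

Lemma Tstar_sym : symmetric_net T -> symmetric_net (Tstar T x0 q).
Proof.
move=> T_sym; apply/matrixP => i j; rewrite !mxE eq_sym.
case: eqP => [-> // | _].
by rewrite distrC -{1}T_sym mxE.
Qed.

End ConfirmationBias.

Theorem mainTheorem2 (R : realType) (n : nat) (hn : (0 < n)%N)
  (T : 'M[R]_n) (x0 : 'I_n -> R) (q : R)
  (hT : row_stochastic T) (hsc : strongly_connected T) (hap : aperiodic T)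
  (hx0 : forall i, 0 <= x0 i <= 1) (hq : 0 <= q <= 1)
  (hsym : symmetric_net T)
  (hscstar : strongly_connected (Tstar T x0 q)) :
  (forall s : 'rV[R]_n, is_influence T s <-> (forall i, s 0 i = n%:R^-1)) /\
  (forall s : 'rV[R]_n, is_influence (Tstar T x0 q) s <-> (forall i, s 0 i = n%:R^-1)).
Proof.
have [T_01 T_row1] := hT.
have T_ge0 i j : 0 <= T i j by case/andP: (T_01 i j).
split=> s; first exact: sym_influence_uniform.
apply: sym_influence_uniform => //.
- exact: Tstar_ge0.
- by move=> i; rewrite Tstar_row_sum.
- exact: Tstar_sym.
Qed.
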